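(* Let $G$ be an ordered graph and let $v$ be a leaf of $G$ (a vertex of degree exactly $1$). Then for every $n\ge 1$, $$r_o(G,K_n)\;\le\;\binom{n}{2}+n\cdot r_o(G-v,K_n),$$ where $G-v$ is the ordered graph obtained from $G$ by deleting $v$ and keeping the induced order on the remaining vertices.
   Context: An ordered graph $G$ on $n$ vertices has vertex set $[n]=\{1,\dots,n\}$ with the natural linear order (a graph on any finite linearly ordered set is identified with one on $[n]$ via the order-preserving bijection). An ordered graph $G$ on $[n]$ is contained in an ordered graph $H$ on a linearly ordered vertex set if there is an injective map $f$ from $[n]$ to $V(H)$ with $f(i)<f(j)$ whenever $i<j$ and $f(i)f(j)\in E(H)$ whenever $ij\in E(G)$; such an image is an ordered copy of $G$. $K_n$ denotes the complete graph on $[n]$. The online ordered Ramsey game for $(G_1,G_2)$ is played by Builder and Painter on the vertex set $\mathbb N$ with its natural order. On each turn Builder selects a previously unselected pair of vertices (an edge) and Painter then colors it red or blue. Builder wins as soon as the colored edges contain an ordered red copy of $G_1$ or an ordered blue copy of $G_2$; Builder tries to minimize and Painter tries to maximize the number of turns. The online ordered Ramsey number $r_o(G_1,G_2)$ is the number of turns after which Builder wins when both players play optimally. *)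

From mathcomp Require Import all_boot.
From Stdlib Require Import ClassicalEpsilon.
Set Implicit Arguments. Unset Strict Implicit. Unset Printing Implicit Defensive.

(* An ordered graph on vertex set {0, ..., overt - 1} (natural order);
   only the values of [oedge] on pairs of vertices < overt matter. *)
Record ograph := OGraph { overt : nat; oedge : rel nat }.

Definition Kn (n : nat) : ograph := OGraph n (fun i j => i != j).

Definition odeg (G : ograph) (v : nat) : nat := count (oedge G v) (iota 0 (overt G)).

Definition is_leaf (G : ograph) (v : nat) : Prop := v < overt G /\ odeg G v = 1.

Definition odelete (G : ograph) (v : nat) : ograph :=
  OGraph (overt G).-1 (fun i j => oedge G (bump v i) (bump v j)).

(* A position of the game: list of coloured edges ((x,y), c) with x < y;
   c = true means red, c = false means blue. *)
Definition position := seq ((nat * nat) * bool).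

Definition has_col (s : position) (c : bool) (x y : nat) : bool :=
  ((minn x y, maxn x y), c) \in s.

Definition contains_copy (G : ograph) (s : position) (c : bool) : Prop :=
  exists f : nat -> nat,
    (forall i j, i < j -> j < overt G -> f i < f j) /\
    (forall i j, i < overt G -> j < overt G -> oedge G i j -> has_col s c (f i) (f j)).

Definition builder_won (G1 G2 : ograph) (s : position) : Prop :=
  contains_copy G1 s true \/ contains_copy G2 s false.

Definition uncoloured (s : position) (x y : nat) : bool :=
  ~~ has (fun p => p.1 == (x, y)) s.

Fixpoint builder_wins_within (G1 G2 : ograph) (k : nat) (s : position) : Prop :=
  match k with
  | 0 => builder_won G1 G2 s
  | k'.+1 => builder_won G1 G2 s \/
      exists x y, x < y /\ uncoloured s x y /\
        forall c : bool, builder_wins_within G1 G2 k' (((x, y), c) :: s)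
  end.

Definition wins_pred (G1 G2 : ograph) : pred nat :=
  fun k => if excluded_middle_informative (builder_wins_within G1 G2 k [::])
           then true else false.

(* online ordered Ramsey number: least k such that Builder wins within k turns
   from the empty board (0 if no such k exists, which never happens). *)
Definition ro (G1 G2 : ograph) : nat :=
  match excluded_middle_informative (exists k, wins_pred G1 G2 k) with
  | left H => ex_minn H
  | right _ => 0
  end.

From mathcomp Require Import all_boot zify.
From Stdlib Require Import ClassicalEpsilon.
Set Implicit Arguments. Unset Strict Implicit. Unset Printing Implicit Defensive.

(* Builder plays n rounds.  Before each round she holds a blue clique xs and a fresh block
   of vertices every one of which, joined in red to any vertex of xs, completes a red G.
   In the block she replays an optimal strategy for (G - v, K_n), stretched so that
   consecutive vertices are far apart.  A blue K_n ends the game; otherwise there is a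
   red copy of G - v, and she joins the image x of the neighbour of v to all of xs.  A red
   edge now finishes G; if all are blue, x joins the clique, and the gap of the stretched
   copy at the position of v becomes the next fresh block: any vertex there, joined in red
   to x, plays the role of v.  Each round costs r_o(G - v, K_n) + |xs| moves. *)

Fixpoint forces (P : position -> Prop) (k : nat) (s : position) : Prop :=
  match k with
  | 0 => P s
  | k'.+1 => P s \/ exists x y, x < y /\ uncoloured s x y /\
        forall c : bool, forces P k' (((x, y), c) :: s)
  end.

Lemma builder_wins_withinE G1 G2 k s :
  builder_wins_within G1 G2 k s <-> forces (builder_won G1 G2) k s.
Proof.
elim: k s => [|k IH] s //=.
by split=> -[|[x [y [xy [xyN win]]]]]; (try by left); right; exists x, y;
  do 2 split=> //; move=> c; apply/IH.
Qed.

Lemma forces_now P k s : P s -> forces P k s.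
Proof. by case: k => [|k] /=; [|left]. Qed.

Lemma forces_impl (P Q : position -> Prop) k s :
  (forall s, P s -> Q s) -> forces P k s -> forces Q k s.
Proof.
move=> PQ; elim: k s => [|k IH] s /=; first exact: PQ.
case=> [/PQ|[x [y [xy [xyN win]]]]]; first by left.
by right; exists x, y; do 2 split => //; move=> c; apply: IH.
Qed.

Lemma forces_le P k k' s : k <= k' -> forces P k s -> forces P k' s.
Proof.
elim: k k' s => [|k IH] [|k'] s //= lekk'; first by left.
case=> [|[x [y [xy [xyN win]]]]]; first by left.
by right; exists x, y; do 2 split => //; move=> c; exact: IH (win c).
Qed.

Lemma forces_cat (P Q : position -> Prop) a b s :
  forces P a s -> (forall s', P s' -> forces Q b s') -> forces Q (a + b) s.
Proof.
move=> + PQ; elim: a s => [|a IH] s; first exact: PQ.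
move=> /= -[/PQ Qb|[x [y [xy [xyN win]]]]].
  by apply: (forces_le (k' := (a + b).+1) _ Qb); lia.
by right; exists x, y; do 2 split => //; move=> c; exact: IH.
Qed.

Lemma has_colC s c a b : has_col s c a b = has_col s c b a.
Proof. by rewrite /has_col minnC maxnC. Qed.

Lemma uncoloured_avoid (A : pred nat) s a b :
  (forall e, e \in s -> (e.1.1 \in A) && (e.1.2 \in A)) -> (a \notin A) || (b \notin A) ->
  uncoloured s a b.
Proof.
move=> sA ab; apply/hasPn => -[[x y] c] /sA /andP[/= xA yA].
by apply: contraL ab => /eqP[<- <-]; rewrite xA yA.
Qed.

Lemma bump_lt v i j : (bump v i < bump v j) = (i < j).
Proof. rewrite /bump; case: (leqP v i); case: (leqP v j); lia. Qed.

Lemma copy_delete G n v s : v < overt G ->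
  builder_won G (Kn n) s -> builder_won (odelete G v) (Kn n) s.
Proof.
move=> vN [[f [f_mono f_edge]]|blue]; last by right.
left; exists (fun i => f (bump v i)); split => /= [i j ij jN|i j iN jN e].
- by apply: f_mono; rewrite ?bump_lt //; move: jN; rewrite /bump; case: (leqP v j); lia.
- by apply: f_edge => //; move: iN jN; rewrite /bump; case: (leqP v i); case: (leqP v j); lia.
Qed.

Lemma builder_wins_within_delete G n v k s : v < overt G ->
  builder_wins_within G (Kn n) k s -> builder_wins_within (odelete G v) (Kn n) k s.
Proof.
move=> vN /builder_wins_withinE win; apply/builder_wins_withinE.
by apply: forces_impl win => s'; apply: copy_delete.
Qed.

Lemma leaf_neighbour G v : is_leaf G v ->
  exists u, [/\ u < overt G, oedge G v u & forall j, j < overt G -> oedge G v j -> j = u].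
Proof.
move=> [vN]; rewrite /odeg => deg1.
have /hasP[u uN vu] : has (oedge G v) (iota 0 (overt G)) by rewrite has_count deg1.
exists u; split=> //; first by move: uN; rewrite mem_iota.
move=> j jN vj; apply/eqP/negPn/negP => ju.
have jrem : j \in rem u (iota 0 (overt G)).
  by rewrite mem_rem_uniq ?iota_uniq // inE /= ju mem_iota.
have := perm_to_rem uN => /permP/(_ (oedge G v)).
rewrite deg1 /= vu => /eqP; rewrite eqSS eq_sym -leqn0 leqNgt -has_count.
by case/negP; apply/hasP; exists j.
Qed.

Lemma blue_clique_copy s n xs : size xs = n -> uniq xs ->
  (forall a b, a \in xs -> b \in xs -> a != b -> has_col s false a b) ->
  contains_copy (Kn n) s false.
Proof.
move=> <- xs_uniq blue; set ys := sort leq xs.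
have ys_size : size ys = size xs by rewrite size_sort.
have ys_sorted : sorted ltn ys.
  by rewrite ltn_sorted_uniq_leq sort_uniq xs_uniq (sort_sorted leq_total).
have ys_mem i : i < size xs -> nth 0 ys i \in xs by rewrite -(mem_sort leq) -ys_size => /mem_nth.
exists (nth 0 ys); split => /= [i j ij jn|i j iN jN ij].
- apply: (sorted_ltn_nth ltn_trans 0 ys_sorted); rewrite // inE ys_size //.
  exact: ltn_trans ij jn.
- by apply: (blue (nth 0 ys i) (nth 0 ys j)); rewrite ?ys_mem ?nth_uniq ?ys_size ?sort_uniq.
Qed.

Definition edges_below (M : nat) (t : position) : Prop :=
  forall e, e \in t -> e.1.1 < M /\ e.1.2 < M.

Definition copy_below (F : ograph) (t : position) (c : bool) (M : nat) (f : nat -> nat) : Prop :=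
  [/\ forall i j, i < j -> j < overt F -> f i < f j,
      forall i j, i < overt F -> j < overt F -> oedge F i j -> has_col t c (f i) (f j)
    & forall i, i < overt F -> f i < M].

Definition bounded_copy F t c M : Prop := exists f, copy_below F t c M f.

Lemma bounded_copy_mono F t c M M' : M <= M' -> bounded_copy F t c M -> bounded_copy F t c M'.
Proof. by move=> leMM' [f [f_mono f_edge f_lt]]; exists f; split=> // i /f_lt/leq_trans; apply. Qed.

Lemma contains_copy_bounded F t c : contains_copy F t c -> exists M, bounded_copy F t c M.
Proof.
case=> f [f_mono f_edge]; exists (\max_(i < overt F) f i).+1, f; split=> // i iN.
by rewrite ltnS (bigmax_sup (Ordinal iN)).
Qed.

Section BoundedStrategies.
Variables F1 F2 : ograph.

Definition bounded_won M t := bounded_copy F1 t true M \/ bounded_copy F2 t false M.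

Fixpoint bounded_wins_within (M k : nat) (t : position) : Prop :=
  match k with
  | 0 => bounded_won M t
  | k'.+1 => bounded_won M t \/ exists x y, x < y /\ y < M /\ uncoloured t x y /\
        forall c : bool, bounded_wins_within M k' (((x, y), c) :: t)
  end.

Lemma bounded_won_mono M M' t : M <= M' -> bounded_won M t -> bounded_won M' t.
Proof. by move=> leMM' [win|win]; [left|right]; apply: bounded_copy_mono win. Qed.

Lemma bounded_wins_within_mono M M' k t :
  M <= M' -> bounded_wins_within M k t -> bounded_wins_within M' k t.
Proof.
move=> leMM'; elim: k t => [|k IH] t /=; first exact: bounded_won_mono.
case=> [win|[x [y [xy [yM [xyN win]]]]]]; first by left; apply: bounded_won_mono win.
right; exists x, y; split=> //; split; first exact: leq_trans yM leMM'.
by split=> // c; apply: IH.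
Qed.

Lemma builder_wins_within_bounded k t :
  builder_wins_within F1 F2 k t -> exists M, bounded_wins_within M k t.
Proof.
have won_bounded t' : builder_won F1 F2 t' -> exists M, bounded_won M t'.
  by case=> /contains_copy_bounded[M win]; exists M; [left|right].
elim: k t => [|k IH] t /=; first exact: won_bounded.
case=> [/won_bounded[M win]|[x [y [xy [xyN win]]]]]; first by exists M; left.
have [[M1 win1] [M2 win2]] := (IH _ (win true), IH _ (win false)).
exists (maxn y.+1 (maxn M1 M2)); right; exists x, y; split=> //; split; first lia.
split=> // -[]; [apply: bounded_wins_within_mono win1|apply: bounded_wins_within_mono win2]; lia.
Qed.

End BoundedStrategies.

Section ScaledEmbedding.
Variables (L K0 : nat) (s0 : position).
Hypothesis K0_gt0 : 0 < K0.

(* Consecutive images are [K0] apart, leaving a free gap of [K0.-1] vertices. *)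
Definition phi p := L + K0 * p.+1.
Definition Phi (e : (nat * nat) * bool) := ((phi e.1.1, phi e.1.2), e.2).

Lemma phi_lt a b : (phi a < phi b) = (a < b).
Proof. by rewrite /phi ltn_add2l ltn_pmul2l. Qed.

Lemma phi_eq a b : (phi a == phi b) = (a == b).
Proof. by rewrite /phi eqn_add2l eqn_pmul2l. Qed.

Lemma phi_min a b : minn (phi a) (phi b) = phi (minn a b).
Proof. by rewrite /minn phi_lt; case: ifP. Qed.

Lemma phi_max a b : maxn (phi a) (phi b) = phi (maxn a b).
Proof. by rewrite /maxn phi_lt; case: ifP. Qed.

Lemma has_col_phi t c a b :
  has_col t c a b -> has_col (map Phi t ++ s0) c (phi a) (phi b).
Proof. by rewrite /has_col mem_cat phi_min phi_max => /(map_f Phi) ->. Qed.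

Lemma contains_copy_phi F t c :
  contains_copy F t c -> contains_copy F (map Phi t ++ s0) c.
Proof.
case=> f [f_mono f_edge]; exists (phi \o f); split=> /= [i j ij jN|i j iN jN e].
  by rewrite phi_lt; apply: f_mono.
exact/has_col_phi/f_edge.
Qed.

Lemma phi_in_iota Z M p : K0 * M.+1 <= Z -> p < M -> phi p \in iota L Z.
Proof. by move=> KZ pM; have := leq_mul (leqnn K0) pM; rewrite mem_iota /phi mulnS; lia. Qed.

Lemma uncoloured_phi t a b :
  uncoloured t a b -> uncoloured (map Phi t) (phi a) (phi b).
Proof.
apply: contra; rewrite has_map => /hasP[e et /eqP/= [/eqP + /eqP]].
rewrite !phi_eq => /eqP ea /eqP eb; apply/hasP; exists e => //.
by rewrite -ea -eb -surjective_pairing.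
Qed.

Lemma forces_phi F1 F2 M k t :
  (forall a b, a < b -> b < M -> uncoloured s0 (phi a) (phi b)) -> edges_below M t ->
  bounded_wins_within F1 F2 M k t ->
  forces (fun s => exists2 t', s = map Phi t' ++ s0 &
           bounded_won F1 F2 M t' /\ edges_below M t') k (map Phi t ++ s0).
Proof.
move=> s0_free; elim: k t => [|k IH] t t_below /=; first by exists t.
case=> [win|[x [y [xy [yM [xyN win]]]]]]; first by left; exists t.
right; exists (phi x), (phi y); split; first by rewrite phi_lt.
split.
  rewrite /uncoloured has_cat negb_or; apply/andP.
  by split; [apply: uncoloured_phi|apply: s0_free].
move=> c; apply: (IH (((x, y), c) :: t)) => // e; rewrite in_cons => /predU1P[-> /=|/t_below //].
by split=> //; apply: ltn_trans xy yM.
Qed.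

Section Gap.
Variables (c : nat) (w : nat).
Hypothesis w_gap : w \in iota (L + K0 * c).+1 K0.-1.

Lemma phi_lt_gap p : p < c -> phi p < w.
Proof. by move=> pc; have := leq_mul (leqnn K0) pc; move: w_gap; rewrite mem_iota /phi; lia. Qed.

Lemma gap_lt_phi p : c <= p -> w < phi p.
Proof.
by move=> cp; have := leq_mul (leqnn K0) cp; move: w_gap; rewrite mem_iota /phi mulnS; lia.
Qed.

Lemma gap_in_iota M Z : c <= M -> K0 * M.+1 <= Z -> w \in iota L Z.
Proof. by move=> cM; have := leq_mul (leqnn K0) cM; move: w_gap; rewrite !mem_iota mulnS; lia. Qed.

End Gap.

Lemma phi_notin_gap c p : phi p \notin iota (L + K0 * c).+1 K0.-1.
Proof.
apply/negP => gap; have [/(phi_lt_gap gap)|/(gap_lt_phi gap)] := ltnP p c; by rewrite ltnn.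
Qed.

End ScaledEmbedding.

Definition blue_star_ext (x : nat) (ys : seq nat) (s s' : position) : Prop :=
  [/\ {subset s <= s'}, forall y, y \in ys -> has_col s' false x y
    & forall e, e \in s' -> e \in s \/ exists2 y, y \in ys & e = ((minn x y, maxn x y), false)].

Lemma star_edge_inj x y y' : (minn x y, maxn x y) = (minn x y', maxn x y') -> y = y'.
Proof. by case; lia. Qed.

Lemma forces_blue_star (W : position -> Prop) x ys s :
  (forall y, y \in ys -> x != y) -> uniq ys ->
  (forall y, y \in ys -> uncoloured s (minn x y) (maxn x y)) ->
  (forall y s', y \in ys -> {subset s <= s'} -> has_col s' true x y -> W s') ->
  forces (fun s' => W s' \/ blue_star_ext x ys s s') (size ys) s.
Proof.
elim: ys s => [|y ys IH] s x_ys ys_uniq ys_free red_wins /=.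
  by right; split=> // e es; left.
have y_ys := mem_head y ys.
have ys_sub : {subset ys <= y :: ys} by move=> y' y'_ys; rewrite inE y'_ys orbT.
right; exists (minn x y), (maxn x y); split; first by have /eqP := x_ys y y_ys; lia.
split=> [|[]]; first exact: ys_free.
  apply: forces_now; left; apply: (red_wins y) => // [e|]; last exact: mem_head.
  by rewrite inE => ->; rewrite orbT.
move: ys_uniq; rewrite cons_uniq => /andP[y_notin ys_uniq].
set s1 := ((minn x y, maxn x y), false) :: s.
have sub1 : {subset s <= s1} by move=> e es; rewrite inE es orbT.
apply: forces_impl (IH s1 _ ys_uniq _ _)
  => [s' [won|[sub blue new]]|y' /ys_sub|y' y'_ys|y' s' y'_ys sub].
- by left.
- right; split=> [e /sub1/sub //|y'|e /new[|[y' y'_ys ->]]].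
    by rewrite inE => /predU1P[->|/blue //]; apply/sub/mem_head.
  + by rewrite inE => /predU1P[->|]; [right; exists y|left].
  + by right; exists y' => //; apply: ys_sub.
- exact: x_ys.
- rewrite /uncoloured /= negb_or -/(uncoloured s _ _) ys_free ?ys_sub // andbT.
  by apply: contra y_notin => /eqP/star_edge_inj ->.
- by apply: red_wins; [apply: ys_sub|move=> e /sub1/sub].
Qed.

Lemma monotone_gap (f : nat -> nat) N v M :
  (forall i j, i < j -> j < N -> f i < f j) -> (forall i, i < N -> f i < M) ->
  exists2 c, c <= M &
    (forall i, i < N -> i < v -> f i < c) /\ (forall i, i < N -> v <= i -> c <= f i).
Proof.
move=> f_mono f_lt; case: v => [|v]; first by exists 0.
have [vN|Nv] := ltnP v N; last by exists M => //; split=> i iN; [rewrite f_lt|lia].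
exists (f v).+1; first exact: f_lt.
split=> i iN; last by move=> vi; apply: f_mono.
by rewrite ltnS leq_eqVlt => /predU1P[-> //|iv]; apply/ltnW/f_mono.
Qed.

Section Leaf.
Variables (G : ograph) (v u : nat).
Hypotheses (G_sym : forall i j, oedge G i j = oedge G j i) (G_irr : forall i, ~~ oedge G i i).
Hypotheses (vN : v < overt G) (uN : u < overt G) (vu : oedge G v u).
Hypothesis u_uniq : forall j, j < overt G -> oedge G v j -> j = u.

Local Notation G' := (odelete G v).
Local Notation u' := (unbump v u).

Lemma leaf_neighbour_neq : u != v.
Proof. by apply: contraNneq (G_irr v) => uv; rewrite -{2}uv. Qed.

Lemma unbump_neighbour_lt : u' < overt G'.
Proof.
by have := leaf_neighbour_neq; move: uN vN; rewrite /= /unbump; case: (ltnP v u) => /=; lia.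
Qed.

(* [v] goes to [w]; being a leaf, it only needs the red edge to the image of [u]. *)
Lemma copy_extend_leaf s h w :
  (forall i j, i < j -> j < overt G' -> h i < h j) ->
  (forall i j, i < overt G' -> j < overt G' -> oedge G' i j -> has_col s true (h i) (h j)) ->
  (forall i, i < overt G' -> i < v -> h i < w) ->
  (forall i, i < overt G' -> v <= i -> w < h i) ->
  has_col s true w (h u') -> contains_copy G s true.
Proof.
move=> h_mono h_edge h_lo h_hi red.
exists (fun i => if i == v then w else h (unbump v i)); split=> [i j ij jN|i j iN jN e].
  case: (eqVneq i v) => [iv|iv]; case: (eqVneq j v) => [jv|jv].
  - by move: ij; rewrite iv jv ltnn.
  - by apply: h_hi; move: ij jN jv; rewrite iv /= /unbump; case: (ltnP v j) => /=; lia.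
  - by apply: h_lo; move: ij jN; rewrite jv /= /unbump; case: (ltnP v i) => /=; lia.
  - by apply: h_mono; move: ij jN iv jv; rewrite /= /unbump;
      case: (ltnP v j); case: (ltnP v i) => /=; lia.
case: (eqVneq i v) => [iv|iv]; case: (eqVneq j v) => [jv|jv].
- by move: e; rewrite iv jv (negbTE (G_irr v)).
- suff -> : j = u by [].
  by apply: u_uniq; rewrite // -iv.
- suff -> : i = u by rewrite has_colC.
  by apply: u_uniq; rewrite // G_sym -jv.
- apply: h_edge; last by rewrite /= !unbumpKcond (negbTE iv) (negbTE jv).
    by move: iN iv; rewrite /= /unbump; case: (ltnP v i) => /=; lia.
  by move: jN jv; rewrite /= /unbump; case: (ltnP v j) => /=; lia.
Qed.

Variables (n M m : nat).
Hypothesis strategy : bounded_wins_within G' (Kn n) M m [::].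

(* Room needed for [r] more rounds: the [m] moves of a round are spread [K0 := room r + 1]
   apart, so that each gap can host the remaining rounds. *)
Fixpoint room r := if r is r'.+1 then (room r').+1 * M.+1 else 0.

(* [xs] is the blue clique built so far; [iota L Z] is a fresh block of vertices, each of
   which would complete a red copy of [G] through a red edge to any [y] in [xs]. *)
Record round_inv (r : nat) (s : position) (L Z : nat) (xs : seq nat) : Prop := {
  inv_size : size xs + r = n;
  inv_uniq : uniq xs;
  inv_blue : forall a b, a \in xs -> b \in xs -> a != b -> has_col s false a b;
  inv_out : forall y, y \in xs -> y \notin iota L Z;
  inv_red : forall y w s', y \in xs -> w \in iota L Z -> {subset s <= s'} ->
     has_col s' true w y -> contains_copy G s' true;
  inv_fresh : forall e, e \in s -> (e.1.1 \notin iota L Z) && (e.1.2 \notin iota L Z);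
  inv_room : room r <= Z }.

Lemma round_inv_next r s L Z xs t f s' :
  round_inv r.+1 s L Z xs -> edges_below M t -> copy_below G' t true M f ->
  blue_star_ext (phi L (room r).+1 (f u')) xs (map (Phi L (room r).+1) t ++ s) s' ->
  exists lo, round_inv r s' lo (room r) (phi L (room r).+1 (f u') :: xs).
Proof.
move=> inv t_below [f_mono f_edge f_lt] [sub blue_x new].
set K0 := (room r).+1; set x := phi L K0 (f u'); have K0_gt0 : 0 < K0 by [].
have KZ : K0 * M.+1 <= Z by have := inv_room inv; rewrite /= mulnC.
have x_in : x \in iota L Z := phi_in_iota L K0_gt0 KZ (f_lt _ unbump_neighbour_lt).
have sub0 : {subset s <= map (Phi L K0) t ++ s} by move=> e es; rewrite mem_cat es orbT.
have [c cM [f_lo f_hi]] := monotone_gap v f_mono f_lt.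
have out_gap y : y \notin iota L Z -> y \notin iota (L + K0 * c).+1 (room r).
  by apply: contra => /(gap_in_iota K0_gt0)/(_ _ _ cM KZ).
exists (L + K0 * c).+1; split=> //.
- by rewrite /= addSnnS (inv_size inv).
- rewrite /= (inv_uniq inv) andbT; apply: contraL x_in; exact: (inv_out inv).
- move=> a b; rewrite !inE => /predU1P[->|a_xs] /predU1P[->|b_xs] ab.
  + by rewrite eqxx in ab.
  + exact: blue_x.
  + by rewrite has_colC; apply: blue_x.
  + by apply/sub/sub0; apply: (inv_blue inv).
- move=> y; rewrite inE => /predU1P[->|y_xs]; first exact: (phi_notin_gap L K0_gt0 c (f u')).
  exact/out_gap/(inv_out inv).
- move=> y w s'' + w_gap sub''; rewrite inE => /predU1P[->|y_xs]; last first.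
    by apply: (inv_red inv y_xs (gap_in_iota K0_gt0 w_gap cM KZ)) => e /sub0/sub/sub''.
  apply: (copy_extend_leaf (h := phi L K0 \o f)) => [i j ij jN|i j iN jN e|i iN iv|i iN vi].
  + by rewrite /= phi_lt //; apply: f_mono.
  + exact/sub''/sub/(has_col_phi _ _ K0_gt0)/f_edge.
  + exact: (phi_lt_gap K0_gt0 w_gap (f_lo i iN iv)).
  + exact: (gap_lt_phi K0_gt0 w_gap (f_hi i iN vi)).
- move=> e /new[|[y y_xs ->]].
    rewrite mem_cat => /orP[/mapP[e0 _ ->]|/(inv_fresh inv)/andP[e1 e2]].
      by rewrite /= !(phi_notin_gap L K0_gt0).
    by rewrite !out_gap.
  have := phi_notin_gap L K0_gt0 c (f u'); have := out_gap _ (inv_out inv y_xs).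
  by rewrite /minn /maxn; case: ifP => _ /= -> ->.
Qed.

Lemma rounds r s L Z xs : round_inv r s L Z xs ->
  forces (builder_won G (Kn n)) (r * m + r * size xs + 'C(r, 2)) s.
Proof.
elim: r s L Z xs => [|r IH] s L Z xs inv.
  apply/forces_now/or_intror/(blue_clique_copy _ (inv_uniq inv) (inv_blue inv)).
  by rewrite -(inv_size inv) addn0.
set K0 := (room r).+1; have K0_gt0 : 0 < K0 by [].
have KZ : K0 * M.+1 <= Z by have := inv_room inv; rewrite /= mulnC.
have s_free a b : a \in iota L Z \/ b \in iota L Z -> uncoloured s a b.
  move=> ab; apply: (uncoloured_avoid (A := [predC iota L Z])) => [e /(inv_fresh inv)|].
    by rewrite !inE.
  by rewrite !inE !negbK; case: ab => ->; rewrite ?orbT.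
have budget : m + (size xs + (r * m + r * (size xs).+1 + 'C(r, 2))) <=
              r.+1 * m + r.+1 * size xs + 'C(r.+1, 2).
  by rewrite binS bin1 !mulSn mulnS; lia.
apply: forces_le budget _.
have phi_in p : p < M -> phi L K0 p \in iota L Z := phi_in_iota L K0_gt0 KZ.
apply: (forces_cat (forces_phi (s0 := s) K0_gt0 _ _ strategy)) => //.
  by move=> a b ab bM; apply: s_free; left; apply: phi_in; apply: ltn_trans ab bM.
move=> _ [t -> [[[f copy_f]|[f [f_mono f_edge _]]] t_below]]; last first.
  by apply/forces_now/or_intror/(contains_copy_phi _ _ K0_gt0); exists f.
set x := phi L K0 (f u'); set s1 := map (Phi L K0) t ++ s.
have x_in : x \in iota L Z.
  by apply/phi_in; case: copy_f => _ _; apply; apply: unbump_neighbour_lt.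
have sub0 : {subset s <= s1} by move=> e es; rewrite mem_cat es orbT.
apply: (forces_cat (forces_blue_star (W := builder_won G (Kn n)) (x := x) _ (inv_uniq inv) _ _)).
- by move=> y /(inv_out inv); apply: contraNneq => <-.
- move=> y y_xs; rewrite /uncoloured has_cat negb_or; apply/andP; split.
    apply: (uncoloured_avoid (A := mem (iota L Z))) => [e /mapP[e0 /t_below[e1 e2] ->]|].
      by rewrite /= !phi_in.
    have := inv_out inv y_xs; rewrite /minn /maxn; case: ifP => _ ->; by rewrite ?orbT.
  by apply: s_free; rewrite /minn /maxn; case: ifP; [left|right].
- by move=> y s' y_xs sub red; left; apply: (inv_red inv y_xs x_in _ red) => e /sub0/sub.
- move=> s' [|/(round_inv_next inv t_below copy_f)[lo /IH]]; first exact: forces_now.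
  by rewrite /= -/K0 -/x.
Qed.

Lemma builder_wins_leaf : builder_wins_within G (Kn n) (n * m + 'C(n, 2)) [::].
Proof.
apply/builder_wins_withinE.
have inv0 : round_inv n [::] 0 (room n) [::] by split.
by have := rounds inv0; rewrite muln0 addn0.
Qed.

End Leaf.

Lemma wins_predP G1 G2 k : wins_pred G1 G2 k <-> builder_wins_within G1 G2 k [::].
Proof. by rewrite /wins_pred; case: excluded_middle_informative. Qed.

Lemma ro_min G1 G2 k : builder_wins_within G1 G2 k [::] -> ro G1 G2 <= k.
Proof.
move=> /wins_predP win; rewrite /ro; case: excluded_middle_informative => [ex|[]]; last by exists k.
by case: ex_minnP => k' _; apply.
Qed.

Lemma ro_wins G1 G2 : (exists k, builder_wins_within G1 G2 k [::]) ->
  builder_wins_within G1 G2 (ro G1 G2) [::].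
Proof.
case=> k /wins_predP win; rewrite /ro.
case: excluded_middle_informative => [ex|[]]; last by exists k.
by case: ex_minnP => k' /wins_predP.
Qed.

Lemma ro_unwinnable G1 G2 : (forall k, ~ builder_wins_within G1 G2 k [::]) -> ro G1 G2 = 0.
Proof.
move=> lose; rewrite /ro; case: excluded_middle_informative => // ex.
by exfalso; case: ex => k /wins_predP; apply: lose.
Qed.

Theorem lemma8 (G : ograph) (v n : nat) :
  (forall i j, oedge G i j = oedge G j i) ->
  (forall i, ~~ oedge G i i) ->
  is_leaf G v ->
  1 <= n ->
  ro G (Kn n) <= 'C(n, 2) + n * ro (odelete G v) (Kn n).
Proof.
(* The bound holds for n = 0 as well. *)
move=> G_sym G_irr leaf _.
have [u [uN vu u_uniq]] := leaf_neighbour leaf.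
have vN : v < overt G by case: leaf.
case: (excluded_middle_informative (exists k, builder_wins_within (odelete G v) (Kn n) k [::]))
  => [/ro_wins win'|lose].
  have [M strategy] := builder_wins_within_bounded win'.
  rewrite addnC; apply: ro_min.
  exact: (builder_wins_leaf G_sym G_irr vN uN vu u_uniq strategy).
rewrite (ro_unwinnable (G1 := G)) // => k /(builder_wins_within_delete vN) win.
by apply: lose; exists k.
Qed.
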